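(* Let $a,b$ be distinct positive real numbers and write $A=A(a,b)$, $G=G(a,b)$, $L=L(a,b)$, $I=I(a,b)$. Then $$L(A^2,G^2)=\frac{A+G}{2}\,L(A,G)>\frac{A+G}{2}\,L>L^2,$$ $$L(I,G)<L,$$ $$L<L(I,L)<L\cdot\frac{I-L}{L-G}.$$
   Context: For positive reals $x\neq y$: $A(x,y)=\frac{x+y}{2}$, $G(x,y)=\sqrt{xy}$, logarithmic mean $L(x,y)=\frac{x-y}{\log x-\log y}$, identric mean $I(x,y)=\frac{1}{e}\left(\frac{x^x}{y^y}\right)^{1/(x-y)}$. *)

From Stdlib Require Import Reals.
Open Scope R_scope.

Definition AM (x y : R) : R := (x + y) / 2.
Definition GM (x y : R) : R := sqrt (x * y).
Definition LM (x y : R) : R := (x - y) / (ln x - ln y).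
(* identric mean: (1/e) (x^x / y^y)^(1/(x-y)), written via exp/ln for x,y > 0 *)
Definition IM (x y : R) : R :=
  / exp 1 * exp ((x * ln x - y * ln y) / (x - y)).

(* Write a = k e^t and b = k e^(-t) with k = sqrt(ab) and t > 0 (all four means are symmetric).
   Then A = k cosh t, G = k, L = k sinh t / t and I = k exp(t coth t - 1), and since
   L(x e^d, x) = x (e^d - 1) / d, the assertions reduce to four inequalities for t > 0:
     2 sinh t < t (cosh t + 1),               ln (cosh t) < t sinh t / (cosh t + 1),
     exp (t coth t - 1) < 1 + cosh t - sinh t / t,   ln (sinh t / t) < t (cosh t + 1) / sinh t - 2.
   Each says that a function with positive derivative on (0, oo) is positive, its value (or
   limit) at 0 being 0.  The hard case is the third: the numerator of the derivative,
   sinh^3 t - t^2 sinh t (cosh t + 2) + t^3 (1 + cosh t), vanishes to order 9 at 0, and its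
   positivity comes from all of its Taylor coefficients being nonnegative. *)

From Stdlib Require Import Reals Lra Lia List.
Import ListNotations.
From Coquelicot Require Import Coquelicot.
Open Scope R_scope.

Lemma increasing_of_derive_pos (f f' : R -> R) (a b : R) : a < b ->
  (forall x, a <= x <= b -> is_derive f x (f' x)) ->
  (forall x, a < x < b -> 0 < f' x) -> f a < f b.
Proof.
  intros hab hd hpos.
  destruct (MVT_cor2 f f' a b hab) as [c [hmvt hc]].
  - intros c hc; apply is_derive_Reals, hd, hc.
  - pose proof (hpos c hc). nra.
Qed.

Lemma pos_of_derive_pos (f f' : R -> R) (t : R) : 0 < t -> f 0 = 0 ->
  (forall x, 0 <= x <= t -> is_derive f x (f' x)) ->
  (forall x, 0 < x < t -> 0 < f' x) -> 0 < f t.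
Proof.
  intros ht h0 hd hpos. rewrite <- h0. exact (increasing_of_derive_pos f f' 0 t ht hd hpos).
Qed.

(* For functions that are only meaningful on (0, oo): the value at 0 is replaced by the limit of
   a continuous minorant. *)
Lemma lt_of_derive_pos_minorant (f f' g : R -> R) : continuity_pt g 0 ->
  (forall x, 0 < x -> is_derive f x (f' x)) -> (forall x, 0 < x -> 0 < f' x) ->
  (forall x, 0 < x -> g x < f x) -> forall t, 0 < t -> g 0 < f t.
Proof.
  intros hg hd hpos hgf t ht.
  assert (hmid : f (t / 2) < f t).
  { apply (increasing_of_derive_pos f f'); [lra | intros x hx; apply hd; lra |].
    intros x hx; apply hpos; lra. }
  enough (g 0 <= f (t / 2)) by lra.
  apply Rnot_lt_le. intros hlt.
  destruct (hg (g 0 - f (t / 2)) ltac:(lra)) as [delta [hdelta hnear]].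
  set (x := Rmin (delta / 2) (t / 4)).
  assert (hx : 0 < x) by (apply Rmin_pos; lra).
  assert (hxd : x <= delta / 2) by apply Rmin_l.
  assert (hxt : x <= t / 4) by apply Rmin_r.
  assert (hgx : R_dist (g x) (g 0) < g 0 - f (t / 2)).
  { apply hnear. split; [split; [exact I | lra] |].
    simpl dist; unfold R_dist. rewrite Rminus_0_r, Rabs_pos_eq; lra. }
  assert (hfx : f x < f (t / 2)).
  { apply (increasing_of_derive_pos f f'); [lra | intros y hy; apply hd; lra |].
    intros y hy; apply hpos; lra. }
  pose proof (hgf x hx). unfold R_dist in hgx. apply Rabs_def2 in hgx. lra.
Qed.

(** * Hyperbolic inequalities *)

Ltac solve_derive x :=
  pose proof (exp_pos x); pose proof (exp_pos (- x));
  unfold cosh, sinh in *; auto_derive;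
  [ .. | rewrite ?exp_Ropp; field ];
  repeat split; auto; try (apply Rgt_not_eq; nra); try nra.

Lemma cosh_sq_sub_sinh_sq t : cosh t * cosh t - sinh t * sinh t = 1.
Proof. unfold cosh, sinh. rewrite exp_Ropp. field. apply Rgt_not_eq, exp_pos. Qed.

Lemma sinh_pos t : 0 < t -> 0 < sinh t.
Proof. intros ht. rewrite <- sinh_0. now apply sinh_lt. Qed.

Lemma cosh_gt_1 t : 0 < t -> 1 < cosh t.
Proof.
  intros ht. enough (0 < cosh t - 1) by lra.
  apply (pos_of_derive_pos (fun x => cosh x - 1) sinh); [exact ht | rewrite cosh_0; ring | | ].
  - intros x _. solve_derive x.
  - intros x hx; apply sinh_pos; lra.
Qed.

Lemma cosh_pos t : 0 < cosh t.
Proof. unfold cosh. pose proof (exp_pos t). pose proof (exp_pos (- t)). lra. Qed.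

Lemma lt_sinh t : 0 < t -> t < sinh t.
Proof.
  intros ht. enough (0 < sinh t - t) by lra.
  apply (pos_of_derive_pos (fun x => sinh x - x) (fun x => cosh x - 1));
    [exact ht | rewrite sinh_0; ring | | ].
  - intros x _. solve_derive x.
  - intros x hx. pose proof (cosh_gt_1 x (proj1 hx)). lra.
Qed.

Lemma sinh_lt_mul_cosh t : 0 < t -> sinh t < t * cosh t.
Proof.
  intros ht. enough (0 < t * cosh t - sinh t) by lra.
  apply (pos_of_derive_pos (fun x => x * cosh x - sinh x) (fun x => x * sinh x));
    [exact ht | rewrite sinh_0; ring | | ].
  - intros x _. solve_derive x.
  - intros x hx. pose proof (sinh_pos x (proj1 hx)). nra.
Qed.

Lemma sinhc_gt_1 t : 0 < t -> 1 < sinh t / t.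
Proof.
  intros ht. pose proof (lt_sinh t ht).
  apply Rmult_lt_reg_r with t; [exact ht |]. unfold Rdiv. rewrite Rmult_assoc, Rinv_l; lra.
Qed.

Lemma t_coth_gt_1 t : 0 < t -> 1 < t * cosh t / sinh t.
Proof.
  intros ht. pose proof (sinh_lt_mul_cosh t ht). pose proof (sinh_pos t ht).
  apply Rmult_lt_reg_r with (sinh t); [lra |]. unfold Rdiv. rewrite Rmult_assoc, Rinv_l; lra.
Qed.

Lemma sinhc_lt_cosh t : 0 < t -> sinh t / t < cosh t.
Proof.
  intros ht. pose proof (sinh_lt_mul_cosh t ht).
  apply Rmult_lt_reg_r with t; [exact ht |]. unfold Rdiv. rewrite Rmult_assoc, Rinv_l; lra.
Qed.

Lemma two_sinh_lt t : 0 < t -> 2 * sinh t < t * (cosh t + 1).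
Proof.
  intros ht. enough (0 < t * (cosh t + 1) - 2 * sinh t) by lra.
  apply (pos_of_derive_pos (fun x => x * (cosh x + 1) - 2 * sinh x)
    (fun x => 1 - cosh x + x * sinh x));
    [exact ht | rewrite sinh_0; ring | intros x _; solve_derive x | ].
  intros x hx.
  apply (pos_of_derive_pos (fun y => 1 - cosh y + y * sinh y) (fun y => y * cosh y));
    [exact (proj1 hx) | rewrite cosh_0, sinh_0; ring | intros y _; solve_derive y | ].
  intros y hy. pose proof (cosh_pos y). nra.
Qed.

Lemma ln_cosh_lt t : 0 < t -> ln (cosh t) < t * sinh t / (cosh t + 1).
Proof.
  intros ht. enough (0 < t * sinh t / (cosh t + 1) - ln (cosh t)) by lra.
  apply (pos_of_derive_pos (fun x => x * sinh x / (cosh x + 1) - ln (cosh x))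
    (fun x => (x * cosh x - sinh x) / (cosh x * (cosh x + 1))));
    [exact ht | rewrite sinh_0, cosh_0, ln_1; field | | ].
  - intros x _. solve_derive x.
  - intros x hx. pose proof (sinh_lt_mul_cosh x (proj1 hx)). pose proof (cosh_pos x).
    apply Rdiv_lt_0_compat; nra.
Qed.

Lemma cubic_mul_cosh_lt_sinh u : 0 < u -> (u - u ^ 3 / 3) * cosh u < sinh u.
Proof.
  intros hu. enough (0 < sinh u - (u - u ^ 3 / 3) * cosh u) by lra.
  apply (pos_of_derive_pos (fun x => sinh x - (x - x ^ 3 / 3) * cosh x)
    (fun x => x * (x * cosh x - sinh x) + x ^ 3 * sinh x / 3));
    [exact hu | rewrite sinh_0, cosh_0; field | intros x _; solve_derive x | ].
  intros x hx. pose proof (sinh_lt_mul_cosh x (proj1 hx)). pose proof (sinh_pos x (proj1 hx)).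
  assert (0 < x * (x * cosh x - sinh x)) by (apply Rmult_lt_0_compat; lra).
  assert (0 < x ^ 3 * sinh x) by (apply Rmult_lt_0_compat; [apply pow_lt |]; lra).
  lra.
Qed.

Lemma quartic_lt_sinh_sq u : 0 < u -> u ^ 2 + u ^ 4 / 3 < sinh u * sinh u.
Proof.
  intros hu. enough (0 < sinh u * sinh u - u ^ 2 - u ^ 4 / 3) by lra.
  apply (pos_of_derive_pos (fun x => sinh x * sinh x - x ^ 2 - x ^ 4 / 3)
    (fun x => 2 * sinh x * cosh x - 2 * x - 4 * x ^ 3 / 3));
    [exact hu | rewrite sinh_0; field | intros x _; solve_derive x | ].
  intros x hx.
  apply (pos_of_derive_pos (fun y => 2 * sinh y * cosh y - 2 * y - 4 * y ^ 3 / 3)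
    (fun y => 4 * (sinh y * sinh y - y ^ 2)));
    [exact (proj1 hx) | rewrite sinh_0; field | intros y _; solve_derive y | ].
  intros y hy. pose proof (lt_sinh y (proj1 hy)). nra.
Qed.

Lemma sinh_double u : sinh (2 * u) = 2 * sinh u * cosh u.
Proof.
  unfold sinh, cosh. replace (2 * u) with (u + u) by ring.
  rewrite Ropp_plus_distr, !exp_plus, !exp_Ropp. field. apply Rgt_not_eq, exp_pos.
Qed.

Lemma cosh_double u : cosh (2 * u) = 1 + 2 * sinh u * sinh u.
Proof.
  unfold sinh, cosh. replace (2 * u) with (u + u) by ring.
  rewrite Ropp_plus_distr, !exp_plus, !exp_Ropp. field. apply Rgt_not_eq, exp_pos.
Qed.

Lemma sq_mul_cosh_lt t : 0 < t ->
  t ^ 2 * (1 + cosh t) < sinh t * sinh t + t * sinh t.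
Proof.
  intros ht. replace t with (2 * (t / 2)) by field. set (u := t / 2).
  assert (hu : 0 < u) by (unfold u; lra).
  rewrite sinh_double, cosh_double.
  pose proof (cubic_mul_cosh_lt_sinh u hu). pose proof (quartic_lt_sinh_sq u hu).
  pose proof (cosh_sq_sub_sinh_sq u). pose proof (cosh_gt_1 u hu). pose proof (sinh_pos u hu).
  set (s := sinh u) in *. set (c := cosh u) in *.
  (* the difference of the two sides is 4 c (s^2 c + u s - 2 u^2 c) *)
  assert (0 < s * s * c + u * s - 2 * u ^ 2 * c).
  { assert ((u ^ 2 + u ^ 4 / 3) * c < s * s * c) by nra.
    assert (u * ((u - u ^ 3 / 3) * c) < u * s) by nra.
    nra. }
  nra.
Qed.

(** * Exponential polynomials with nonnegative Taylor coefficients *)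

Lemma is_series_pos (u : nat -> R) (l : R) (N : nat) :
  is_series u l -> (forall n, 0 <= u n) -> 0 < u N -> 0 < l.
Proof.
  intros hl hnn hN. apply is_series_Reals in hl.
  enough (u N <= sum_f_R0 u N) by (pose proof (sum_incr u N l hl hnn); lra).
  destruct N as [|N]; simpl; [lra |].
  pose proof (cond_pos_sum u N hnn). lra.
Qed.

Lemma is_pseries_pos (a : nat -> R) (t l : R) (N : nat) : 0 < t ->
  is_pseries a t l -> (forall n, 0 <= a n) -> 0 < a N -> 0 < l.
Proof.
  intros ht hl hnn hN. apply is_pseries_R in hl.
  apply (is_series_pos _ _ N hl).
  - intros n. apply Rmult_le_pos; [apply hnn | apply pow_le; lra].
  - apply Rmult_lt_0_compat; [exact hN | apply pow_lt, ht].
Qed.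

Definition exp_monomial_coef (j : nat) (k : R) : nat -> R :=
  PS_incr_n (fun n => k ^ n / INR (Factorial.fact n)) j.

Lemma is_pseries_exp_monomial j k t :
  is_pseries (exp_monomial_coef j k) t (t ^ j * exp (k * t)).
Proof.
  assert (hexp : is_pseries (fun n => k ^ n / INR (Factorial.fact n)) t (exp (k * t))).
  { pose proof (is_exp_Reals (k * t)) as h. apply is_pseries_R in h. apply is_pseries_R.
    eapply is_series_ext; [| exact h]. intros n. simpl. rewrite Rpow_mult_distr. field.
    apply INR_fact_neq_0. }
  pose proof (is_pseries_incr_n _ j t _ hexp) as h. rewrite pow_n_pow in h. exact h.
Qed.

(* A list of triples (c, j, k) encodes the exponential polynomial sum c t^j e^(k t). *)
Definition expoly_eval (p : list (R * nat * R)) (t : R) : R :=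
  fold_right (fun '(c, j, k) s => c * (t ^ j * exp (k * t)) + s) 0 p.

Definition expoly_coef (p : list (R * nat * R)) (n : nat) : R :=
  fold_right (fun '(c, j, k) s => c * exp_monomial_coef j k n + s) 0 p.

Lemma is_pseries_expoly p t : is_pseries (expoly_coef p) t (expoly_eval p t).
Proof.
  induction p as [| [[c j] k] p IHp]; simpl.
  - pose proof (is_pseries_scal 0 _ t _ (Rmult_comm _ _) (is_pseries_exp_monomial 0 0 t)) as h.
    replace (scal _ _) with 0 in h by (unfold scal; simpl; unfold mult; simpl; ring).
    eapply is_pseries_ext; [| exact h].
    intros n. unfold PS_scal, scal; simpl; unfold mult; simpl. ring.
  - exact (is_pseries_plus _ _ t _ _
      (is_pseries_scal c _ t _ (Rmult_comm _ _) (is_pseries_exp_monomial j k t)) IHp).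
Qed.

Lemma expoly_eval_pos p t N : 0 < t ->
  (forall n, 0 <= expoly_coef p n) -> 0 < expoly_coef p N -> 0 < expoly_eval p t.
Proof. intros ht. exact (is_pseries_pos _ t _ N ht (is_pseries_expoly p t)). Qed.

Lemma exp_monomial_coef_shift j k m :
  exp_monomial_coef j k (m + j) = k ^ m / INR (Factorial.fact m).
Proof.
  unfold exp_monomial_coef. rewrite PS_incr_n_simplify.
  destruct (Compare_dec.le_lt_dec j (m + j)) as [_ | h]; [| lia].
  now replace (m + j - j)%nat with m by lia.
Qed.

Definition exp_coth_numer : list (R * nat * R) :=
  [(1, 0%nat, 3); (-1, 0%nat, -3); (-3, 0%nat, 1); (3, 0%nat, -1);
   (-2, 2%nat, 2); (2, 2%nat, -2); (-8, 2%nat, 1); (8, 2%nat, -1);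
   (8, 3%nat, 0); (4, 3%nat, 1); (4, 3%nat, -1)].

Lemma exp_coth_numer_eval t :
  expoly_eval exp_coth_numer t =
  8 * (sinh t ^ 3 - t ^ 2 * sinh t * (cosh t + 2) + t ^ 3 * (1 + cosh t)).
Proof.
  unfold expoly_eval, exp_coth_numer, cosh, sinh; simpl.
  replace (3 * t) with (t + t + t) by ring. replace (-3 * t) with (- t + - t + - t) by ring.
  replace (2 * t) with (t + t) by ring. replace (-2 * t) with (- t + - t) by ring.
  replace (1 * t) with t by ring. replace (-1 * t) with (- t) by ring.
  replace (0 * t) with 0 by ring.
  rewrite !exp_plus, exp_0, !exp_Ropp. field. apply Rgt_not_eq, exp_pos.
Qed.

Definition exp_coth_numer_core (m : nat) : R :=
  3 ^ (m + 3) - 3 - (2 ^ (m + 2) + 8) * (INR m + 3) * (INR m + 2)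
  + 4 * (INR m + 3) * (INR m + 2) * (INR m + 1).

Lemma exp_coth_numer_coef m :
  INR (Factorial.fact (m + 3)) * expoly_coef exp_coth_numer (m + 3) =
  (1 + (-1) ^ m) * exp_coth_numer_core m + 8 * 0 ^ m * (INR m + 3) * (INR m + 2) * (INR m + 1).
Proof.
  unfold expoly_coef, exp_coth_numer; simpl fold_right.
  replace (m + 3)%nat with (m + 3 + 0)%nat by lia. rewrite !(exp_monomial_coef_shift 0).
  replace (m + 3 + 0)%nat with (m + 1 + 2)%nat by lia. rewrite !(exp_monomial_coef_shift 2).
  replace (m + 1 + 2)%nat with (m + 3)%nat by lia. rewrite !(exp_monomial_coef_shift 3).
  replace (-3) with (-1 * 3) by ring. replace (-2) with (-1 * 2) by ring.
  rewrite !Rpow_mult_distr. unfold exp_coth_numer_core.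
  replace (m + 3)%nat with (S (S (S m))) by lia. replace (m + 1)%nat with (S m) by lia.
  replace (m + 2)%nat with (S (S m)) by lia.
  cbn [Factorial.fact]. rewrite !mult_INR, !S_INR. simpl pow. rewrite !pow1.
  field. pose proof (INR_fact_neq_0 m). pose proof (pos_INR m). repeat split; lra.
Qed.

Lemma exp_coth_numer_core_growth p :
  2 ^ (p + 8) * (INR p + 9) * (INR p + 8) + 8 * (INR p + 9) * (INR p + 8) + 3 < 3 ^ (p + 9).
Proof.
  induction p as [| p IHp]; [simpl; lra |].
  rewrite S_INR. replace (S p + 8)%nat with (S (p + 8)) by lia.
  replace (S p + 9)%nat with (S (p + 9)) by lia. simpl pow.
  pose proof (pos_INR p). assert (0 < 2 ^ (p + 8)) by (apply pow_lt; lra).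
  assert (0 <= 2 ^ (p + 8) * (INR p + 9) * (INR p + 4))
    by (apply Rmult_le_pos; [apply Rmult_le_pos |]; lra).
  nra.
Qed.

Lemma exp_coth_numer_core_nonneg m : (2 <= m)%nat -> 0 <= exp_coth_numer_core m.
Proof.
  intros hm. unfold exp_coth_numer_core.
  destruct m as [|[|[|[|[|[|m]]]]]]; try lia; try (simpl; lra).
  replace (S (S (S (S (S (S m)))))) with (m + 6)%nat by lia.
  replace (m + 6 + 3)%nat with (m + 9)%nat by lia. replace (m + 6 + 2)%nat with (m + 8)%nat by lia.
  rewrite plus_INR. simpl INR.
  pose proof (exp_coth_numer_core_growth m). pose proof (pos_INR m).
  assert (0 <= (INR m + 9) * (INR m + 8) * (INR m + 7))
    by (apply Rmult_le_pos; [apply Rmult_le_pos |]; lra).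
  nra.
Qed.

Lemma exp_coth_numer_coef_nonneg n : 0 <= expoly_coef exp_coth_numer n.
Proof.
  destruct (Nat.lt_ge_cases n 3) as [hn | hn].
  - destruct n as [|[|[|n]]]; try lia;
      unfold expoly_coef, exp_monomial_coef; simpl; unfold zero; simpl; lra.
  - replace n with ((n - 3) + 3)%nat by lia. set (m := (n - 3)%nat).
    pose proof (exp_coth_numer_coef m) as hcoef. pose proof (INR_fact_lt_0 (m + 3)).
    enough (0 <= INR (Factorial.fact (m + 3)) * expoly_coef exp_coth_numer (m + 3)) by nra.
    rewrite hcoef. destruct m as [|[|m]]; [unfold exp_coth_numer_core; simpl; lra .. |].
    rewrite pow_i by lia.
    pose proof (exp_coth_numer_core_nonneg (S (S m)) ltac:(lia)).
    pose proof (Rabs_maj2 ((-1) ^ S (S m))). rewrite pow_1_abs in *.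
    nra.
Qed.

Lemma exp_coth_numer_coef_9 : 0 < expoly_coef exp_coth_numer 9.
Proof.
  change 9%nat with (6 + 3)%nat.
  pose proof (exp_coth_numer_coef 6) as hcoef. pose proof (INR_fact_lt_0 (6 + 3)).
  assert (0 < (1 + (-1) ^ 6) * exp_coth_numer_core 6
              + 8 * 0 ^ 6 * (INR 6 + 3) * (INR 6 + 2) * (INR 6 + 1)).
  { pose proof (exp_coth_numer_core_growth 0) as hg. unfold exp_coth_numer_core.
    simpl in hg |- *. lra. }
  nra.
Qed.

Lemma exp_coth_numer_pos t : 0 < t ->
  0 < sinh t ^ 3 - t ^ 2 * sinh t * (cosh t + 2) + t ^ 3 * (1 + cosh t).
Proof.
  intros ht. pose proof (expoly_eval_pos exp_coth_numer t 9 ht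
    exp_coth_numer_coef_nonneg exp_coth_numer_coef_9) as h.
  rewrite exp_coth_numer_eval in h. lra.
Qed.

(** * The two inequalities behind L(I, L) and L(I, G) *)

Lemma continuity_pt_one_sub_cosh : continuity_pt (fun x => 1 - cosh x) 0.
Proof. apply derivable_continuous_pt. reg. Qed.

Lemma ln_sinhc_lt t : 0 < t -> ln (sinh t / t) < t * (cosh t + 1) / sinh t - 2.
Proof.
  intros ht. enough (1 - cosh 0 < t * (cosh t + 1) / sinh t - 2 - ln (sinh t / t))
    by (rewrite cosh_0 in *; lra).
  apply (lt_of_derive_pos_minorant (fun x => x * (cosh x + 1) / sinh x - 2 - ln (sinh x / x))
    (fun x => (sinh x * sinh x + x * sinh x - x ^ 2 * (1 + cosh x)) / (x * (sinh x * sinh x)))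
    (fun x => 1 - cosh x) continuity_pt_one_sub_cosh); [| | | exact ht].
  - intros x hx. pose proof (sinhc_gt_1 x hx).
    assert (1 < exp x) by (rewrite <- exp_0; apply exp_increasing; lra).
    assert (exp (- x) < 1) by (rewrite <- exp_0; apply exp_increasing; lra).
    solve_derive x.
  - intros x hx. pose proof (sq_mul_cosh_lt x hx). pose proof (sinh_pos x hx).
    apply Rdiv_lt_0_compat; [lra | apply Rmult_lt_0_compat; nra].
  - intros x hx. pose proof (two_sinh_lt x hx). pose proof (sinh_pos x hx).
    pose proof (sinhc_lt_cosh x hx).
    assert (2 <= x * (cosh x + 1) / sinh x).
    { apply Rmult_le_reg_r with (sinh x); [lra |]. unfold Rdiv. rewrite Rmult_assoc, Rinv_l; lra. }
    pose proof (exp_ineq1_le (ln (sinh x / x))) as hln.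
    rewrite exp_ln in hln by (apply Rdiv_lt_0_compat; lra). lra.
Qed.

Lemma exp_coth_lt t : 0 < t -> exp (t * cosh t / sinh t - 1) < 1 + cosh t - sinh t / t.
Proof.
  assert (hsinhc : forall x, 0 < x -> 1 < 1 + cosh x - sinh x / x).
  { intros x hx. pose proof (sinhc_lt_cosh x hx). lra. }
  intros ht. pose proof (hsinhc t ht).
  rewrite <- (exp_ln (1 + cosh t - sinh t / t)) by lra. apply exp_increasing.
  enough (1 - cosh 0 < ln (1 + cosh t - sinh t / t) - (t * cosh t / sinh t - 1))
    by (rewrite cosh_0 in *; lra).
  apply (lt_of_derive_pos_minorant
    (fun x => ln (1 + cosh x - sinh x / x) - (x * cosh x / sinh x - 1))
    (fun x => (sinh x ^ 3 - x ^ 2 * sinh x * (cosh x + 2) + x ^ 3 * (1 + cosh x))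
      / (x ^ 2 * (1 + cosh x - sinh x / x) * (sinh x * sinh x)))
    (fun x => 1 - cosh x) continuity_pt_one_sub_cosh); [| | | exact ht].
  - intros x hx. pose proof (hsinhc x hx).
    assert (1 < exp x) by (rewrite <- exp_0; apply exp_increasing; lra).
    assert (exp (- x) < 1) by (rewrite <- exp_0; apply exp_increasing; lra).
    assert (exp x * exp x - 1 < x * (exp x * exp x + 1)).
    { pose proof (sinh_lt_mul_cosh x hx) as h. unfold sinh, cosh in h. rewrite exp_Ropp in h.
      assert (exp x * / exp x = 1) by (field; lra). nra. }
    solve_derive x.
  - intros x hx. pose proof (exp_coth_numer_pos x hx). pose proof (sinh_pos x hx).
    pose proof (hsinhc x hx).
    apply Rdiv_lt_0_compat; [lra |].
    apply Rmult_lt_0_compat; [apply Rmult_lt_0_compat; [apply pow_lt |] |]; nra.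
  - intros x hx. pose proof (hsinhc x hx). pose proof (sinh_pos x hx). pose proof (lt_sinh x hx).
    assert (0 <= ln (1 + cosh x - sinh x / x)) by (rewrite <- ln_1; apply ln_le; lra).
    assert (x * cosh x / sinh x < cosh x).
    { apply Rmult_lt_reg_r with (sinh x); [lra |]. unfold Rdiv. rewrite Rmult_assoc, Rinv_l by lra.
      pose proof (cosh_gt_1 x hx). nra. }
    lra.
Qed.
(** * The means *)

Lemma AM_comm x y : AM x y = AM y x.
Proof. unfold AM. now rewrite Rplus_comm. Qed.

Lemma GM_comm x y : GM x y = GM y x.
Proof. unfold GM. now rewrite Rmult_comm. Qed.

Lemma LM_comm x y : LM x y = LM y x.
Proof.
  unfold LM, Rdiv. rewrite <- (Ropp_minus_distr y x), <- (Ropp_minus_distr (ln y)), Rinv_opp. ring.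
Qed.

Lemma IM_comm x y : IM x y = IM y x.
Proof.
  unfold IM, Rdiv. rewrite <- (Ropp_minus_distr y x), <- (Ropp_minus_distr (y * ln y)), Rinv_opp.
  f_equal. f_equal. ring.
Qed.

Lemma ln_mul_exp k t : 0 < k -> ln (k * exp t) = ln k + t.
Proof. intros hk. rewrite ln_mult, ln_exp; auto using exp_pos. Qed.

Lemma LM_mul_exp x d : 0 < x -> d <> 0 -> LM (x * exp d) x = x * ((exp d - 1) / d).
Proof.
  intros hx hd. unfold LM. rewrite ln_mul_exp by exact hx.
  replace (ln x + d - ln x) with d by ring. field. exact hd.
Qed.

Lemma exp_parametrization a b : 0 < a -> 0 < b -> b < a ->
  exists k t, 0 < k /\ 0 < t /\ a = k * exp t /\ b = k * exp (- t).
Proof.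
  intros ha hb hba.
  exists (exp ((ln a + ln b) / 2)), ((ln a - ln b) / 2).
  assert (ln b < ln a) by (apply ln_increasing; lra).
  split; [apply exp_pos |]. split; [lra |].
  rewrite <- !exp_plus. split.
  - replace ((ln a + ln b) / 2 + (ln a - ln b) / 2) with (ln a) by field. now rewrite exp_ln.
  - replace ((ln a + ln b) / 2 + - ((ln a - ln b) / 2)) with (ln b) by field. now rewrite exp_ln.
Qed.

Lemma AM_exp k t : AM (k * exp t) (k * exp (- t)) = k * cosh t.
Proof. unfold AM, cosh. field. Qed.

Lemma GM_exp k t : 0 <= k -> GM (k * exp t) (k * exp (- t)) = k.
Proof.
  intros hk. unfold GM. replace (k * exp t * (k * exp (- t))) with (k * k).
  - now apply sqrt_square.
  - rewrite exp_Ropp. field. apply Rgt_not_eq, exp_pos.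
Qed.

Lemma LM_exp k t : 0 < k -> t <> 0 -> LM (k * exp t) (k * exp (- t)) = k * (sinh t / t).
Proof.
  intros hk ht. unfold LM, sinh. rewrite !ln_mul_exp by exact hk.
  replace (ln k + t - (ln k + - t)) with (2 * t) by ring. field. exact ht.
Qed.

Lemma IM_exp k t : 0 < k -> 0 < t ->
  IM (k * exp t) (k * exp (- t)) = k * exp (t * cosh t / sinh t - 1).
Proof.
  intros hk ht. pose proof (sinh_pos t ht) as hs. unfold IM. rewrite !ln_mul_exp by exact hk.
  replace ((k * exp t * (ln k + t) - k * exp (- t) * (ln k + - t)) / (k * exp t - k * exp (- t)))
    with (ln k + (t * cosh t / sinh t - 1) + 1).
  - rewrite !exp_plus, exp_ln by exact hk. field. apply Rgt_not_eq, exp_pos.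
  - unfold sinh, cosh in *. field. split; apply Rgt_not_eq; nra.
Qed.

Lemma LM_sq x y : 0 < x -> 0 < y -> x <> y -> LM (x ^ 2) (y ^ 2) = (x + y) / 2 * LM x y.
Proof.
  intros hx hy hxy. unfold LM. rewrite !ln_pow by assumption. simpl INR.
  assert (hln : ln x - ln y <> 0) by (intros h; apply hxy, ln_inv; lra).
  field. split; [exact hln | lra].
Qed.

Lemma lt_LM_mul_exp x d : 0 < x -> 0 < d -> x < LM (x * exp d) x.
Proof.
  intros hx hd. rewrite LM_mul_exp by lra.
  pose proof (exp_ineq1 d (Rgt_not_eq _ _ hd)).
  enough (1 < (exp d - 1) / d) by nra.
  apply Rmult_lt_reg_r with d; [exact hd |]. unfold Rdiv. rewrite Rmult_assoc, Rinv_l; lra.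
Qed.

Lemma LM_mul_exp_lt x g d : 0 < g < x -> 0 < d -> 1 - g / x < d ->
  LM (x * exp d) x < x * ((x * exp d - x) / (x - g)).
Proof.
  intros hgx hd hdg. rewrite LM_mul_exp by lra.
  assert (1 < exp d) by (rewrite <- exp_0; apply exp_increasing; exact hd).
  assert (x - g < x * d).
  { apply Rmult_lt_compat_l with (r := x) in hdg; [| lra].
    replace (x * (1 - g / x)) with (x - g) in hdg by (field; lra). exact hdg. }
  apply Rmult_lt_compat_l; [lra |].
  replace (x * exp d - x) with (x * (exp d - 1)) by ring.
  apply Rmult_lt_reg_r with (d * (x - g)); [nra |].
  replace ((exp d - 1) / d * (d * (x - g))) with ((exp d - 1) * (x - g)) by (field; lra).
  replace (x * (exp d - 1) / (x - g) * (d * (x - g))) with ((exp d - 1) * (x * d)) by (field; lra).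
  apply Rmult_lt_compat_l; lra.
Qed.

Definition mean_inequalities (A G L I : R) : Prop :=
  (LM (A ^ 2) (G ^ 2) = (A + G) / 2 * LM A G /\
   (A + G) / 2 * LM A G > (A + G) / 2 * L /\
   (A + G) / 2 * L > L ^ 2) /\
  LM I G < L /\
  (L < LM I L /\ LM I L < L * ((I - L) / (L - G))).

Lemma sinhc_lt_LM_cosh k t : 0 < k -> 0 < t -> k * (sinh t / t) < LM (k * cosh t) k.
Proof.
  intros hk ht. pose proof (cosh_gt_1 t ht). pose proof (sinh_pos t ht).
  pose proof (ln_cosh_lt t ht). pose proof (cosh_sq_sub_sinh_sq t).
  assert (hln : 0 < ln (cosh t)) by (rewrite <- ln_1; apply ln_increasing; lra).
  rewrite <- (exp_ln (cosh t)) at 1 by lra. rewrite LM_mul_exp by lra. rewrite exp_ln by lra.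
  apply Rmult_lt_compat_l; [exact hk |].
  assert (hkey : sinh t * ln (cosh t) < t * (cosh t - 1)).
  { assert (t * sinh t / (cosh t + 1) * sinh t = t * (cosh t - 1)) as <-.
    { replace (t * sinh t / (cosh t + 1) * sinh t) with (t * (sinh t * sinh t) / (cosh t + 1))
        by (field; lra).
      replace (sinh t * sinh t) with ((cosh t - 1) * (cosh t + 1)) by lra. field. lra. }
    nra. }
  apply Rmult_lt_reg_r with (t * ln (cosh t)); [nra |].
  replace (sinh t / t * (t * ln (cosh t))) with (sinh t * ln (cosh t)) by (field; lra).
  replace ((cosh t - 1) / ln (cosh t) * (t * ln (cosh t))) with (t * (cosh t - 1)) by (field; lra).
  exact hkey.
Qed.

Lemma sinhc_lt_AM_cosh k t : 0 < k -> 0 < t -> k * (sinh t / t) < (k * cosh t + k) / 2.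
Proof.
  intros hk ht. pose proof (two_sinh_lt t ht).
  replace ((k * cosh t + k) / 2) with (k * ((cosh t + 1) / 2)) by field.
  apply Rmult_lt_compat_l; [exact hk |].
  apply Rmult_lt_reg_r with (2 * t); [lra |].
  replace (sinh t / t * (2 * t)) with (2 * sinh t) by (field; lra).
  lra.
Qed.

Lemma LM_exp_coth_lt k t : 0 < k -> 0 < t ->
  LM (k * exp (t * cosh t / sinh t - 1)) k < k * (sinh t / t).
Proof.
  intros hk ht. pose proof (t_coth_gt_1 t ht). pose proof (exp_coth_lt t ht).
  pose proof (sinh_pos t ht).
  set (w := t * cosh t / sinh t - 1) in *.
  assert (hw : 0 < w) by (unfold w; lra).
  rewrite LM_mul_exp by lra.
  apply Rmult_lt_compat_l; [exact hk |].
  apply Rmult_lt_reg_r with w; [exact hw |].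
  replace ((exp w - 1) / w * w) with (exp w - 1) by (field; lra).
  replace (sinh t / t * w) with (cosh t - sinh t / t) by (unfold w; field; lra).
  lra.
Qed.

Lemma mean_inequalities_exp k t : 0 < k -> 0 < t ->
  mean_inequalities (k * cosh t) k (k * (sinh t / t)) (k * exp (t * cosh t / sinh t - 1)).
Proof.
  intros hk ht.
  pose proof (cosh_gt_1 t ht). pose proof (sinhc_gt_1 t ht). pose proof (sinh_pos t ht).
  pose proof (sinhc_lt_LM_cosh k t hk ht). pose proof (sinhc_lt_AM_cosh k t hk ht).
  set (r := sinh t / t) in *. set (w := t * cosh t / sinh t - 1).
  set (D := w - ln r).
  assert (hI : k * exp w = k * r * exp D).
  { unfold D. rewrite Rminus_def, exp_plus, exp_Ropp, exp_ln by lra. field. lra. }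
  assert (hD : 1 - k / (k * r) < D).
  { pose proof (ln_sinhc_lt t ht). unfold D, w, r in *.
    replace (1 - k / (k * (sinh t / t))) with (1 - t / sinh t) by (field; lra).
    replace (t * (cosh t + 1) / sinh t - 2)
      with (t * cosh t / sinh t - 1 - (1 - t / sinh t)) in * by (field; lra).
    lra. }
  assert (hD0 : 0 < D).
  { enough (0 < 1 - k / (k * r)) by lra.
    replace (k / (k * r)) with (/ r) by (field; lra).
    enough (/ r < 1) by lra.
    rewrite <- Rinv_1. apply Rinv_lt_contravar; lra. }
  assert (hr : 0 < k * r) by nra.
  unfold mean_inequalities. split; [split; [| split] | split; [| split]].
  - apply LM_sq; [nra | exact hk | intros h; nra].
  - apply Rmult_lt_compat_l; [lra | assumption].
  - simpl. rewrite Rmult_1_r. apply Rmult_lt_compat_r; assumption.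
  - apply LM_exp_coth_lt; assumption.
  - rewrite hI. apply lt_LM_mul_exp; nra.
  - rewrite hI. apply LM_mul_exp_lt; nra.
Qed.

Lemma mean_inequalities_gt a b : 0 < b -> b < a ->
  mean_inequalities (AM a b) (GM a b) (LM a b) (IM a b).
Proof.
  intros hb hba.
  destruct (exp_parametrization a b ltac:(lra) hb hba) as (k & t & hk & ht & -> & ->).
  rewrite AM_exp, GM_exp, LM_exp, IM_exp by lra.
  exact (mean_inequalities_exp k t hk ht).
Qed.

Theorem theorem3 (a b : R) (ha : 0 < a) (hb : 0 < b) (hab : a <> b) :
  let A := AM a b in let G := GM a b in let L := LM a b in let I := IM a b in
  (LM (A ^ 2) (G ^ 2) = (A + G) / 2 * LM A G /\
   (A + G) / 2 * LM A G > (A + G) / 2 * L /\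
   (A + G) / 2 * L > L ^ 2) /\
  LM I G < L /\
  (L < LM I L /\ LM I L < L * ((I - L) / (L - G))).
Proof.
  cbv zeta. fold (mean_inequalities (AM a b) (GM a b) (LM a b) (IM a b)).
  destruct (Rtotal_order a b) as [hlt | [heq | hgt]].
  - rewrite AM_comm, GM_comm, LM_comm, IM_comm. exact (mean_inequalities_gt b a ha hlt).
  - contradiction.
  - exact (mean_inequalities_gt a b hb hgt).
Qed.
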